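(* Let $\boldsymbol t=(\boldsymbol u,\boldsymbol v)$ and suppose that $\widehat{\boldsymbol \theta}$ in step (S1) exists. Then $\mu_u(\widehat{\boldsymbol \theta})=\boldsymbol u\in M_u$, and in step (S2) we get that $\theta_v(\check{\boldsymbol \mu})=\widehat{\boldsymbol \theta}_v$. In particular, after steps (S1) and (S2), the optimum $\check{\boldsymbol \mu}$ represents an element of the mixed convex family $\mathcal{E}'$.
   Context: Let $\mathcal{E}=\{P_{\boldsymbol\theta}:\boldsymbol\theta\in\Theta\}$ be a minimally represented regular exponential family with densities $p(\boldsymbol x;\boldsymbol\theta)=\exp\{\langle\boldsymbol\theta,\boldsymbol t(\boldsymbol x)\rangle-A(\boldsymbol\theta)\}$, open canonical parameter space $\Theta\subseteq\mathbb{R}^k$, mean parameter $\boldsymbol\mu=\mu(\boldsymbol\theta)=\nabla A(\boldsymbol\theta)$ ranging over $M$ (interior of the convex hull of $\boldsymbol t(\mathcal X)$), with inverse map $\theta(\boldsymbol\mu)$. Split the sufficient statistic $\boldsymbol t=(\boldsymbol u,\boldsymbol v)$ and correspondingly $\boldsymbol\theta=(\boldsymbol\theta_u,\boldsymbol\theta_v)$, $\boldsymbol\mu=(\boldsymbol\mu_u,\boldsymbol\mu_v)$; write $\mu_u(\boldsymbol\theta)$, $\theta_v(\boldsymbol\mu)$ for the corresponding components of the maps. The mixed parameter $(\boldsymbol\mu_u,\boldsymbol\theta_v)$ ranges over $M_u\times\Theta_v$ (projections of $M$ and $\Theta$). The mixed convex family $\mathcal{E}'$ consists of all distributions with mixed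 parameters in $M_u'\times\Theta_v'$, where $M_u'\subseteq M_u$, $\Theta_v'\subseteq\Theta_v$ are convex and relatively closed. Let $C_u=\{\boldsymbol\mu\in M:\boldsymbol\mu_u\in M_u'\}$ and $C_v=\{\boldsymbol\theta\in\Theta:\boldsymbol\theta_v\in\Theta_v'\}$. The Kullback–Leibler divergence is $\boldsymbol K(\boldsymbol\mu_1,\boldsymbol\theta_2)=-\langle\boldsymbol\mu_1,\boldsymbol\theta_2\rangle+A^*(\boldsymbol\mu_1)+A(\boldsymbol\theta_2)$, with $A^*$ the Fenchel conjugate of $A$; it is strictly convex in each argument. Given data with average sufficient statistic $\boldsymbol t$: step (S1) minimizes $\boldsymbol K(\boldsymbol t,\boldsymbol\theta)$ over $\boldsymbol\theta\in C_v$, with (unique, if existing) optimum $\widehat{\boldsymbol\theta}$; step (S2) minimizes $\boldsymbol K(\boldsymbol\mu,\widehat{\boldsymbol\theta})$ over $\boldsymbol\mu\in C_u$, with unique optimum $\check{\boldsymbol\mu}$ (the mixed dual estimator). *)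

From HB Require Import structures.
From mathcomp Require Import all_boot all_order all_algebra.
From mathcomp Require Import all_classical all_reals all_analysis.
Set Implicit Arguments. Unset Strict Implicit. Unset Printing Implicit Defensive.
Import Order.TTheory GRing.Theory Num.Theory.
Import numFieldNormedType.Exports.
Local Open Scope classical_set_scope.
Local Open Scope ring_scope.

Definition dotv (R : realType) (n : nat) (x y : 'rV[R]_n) : R :=
  \sum_(i < n) x ord0 i * y ord0 i.

Definition grad (R : realType) (n : nat) (f : 'rV[R]_n -> R) (x : 'rV[R]_n)
  : 'rV[R]_n := \row_(i < n) ('d f x (delta_mx ord0 i : 'rV[R]_n)).

Definition upart (R : realType) (ku kv : nat) (x : 'rV[R]_(ku + kv)) : 'rV[R]_ku :=
  lsubmx x.
Definition vpart (R : realType) (ku kv : nat) (x : 'rV[R]_(ku + kv)) : 'rV[R]_kv :=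
  rsubmx x.

Definition strictly_convex_on (R : realType) (n : nat) (S : set 'rV[R]_n)
  (f : 'rV[R]_n -> R) : Prop :=
  forall x y l, S x -> S y -> x <> y -> 0 < l -> l < 1 ->
    f (l *: x + (1 - l) *: y) < l * f x + (1 - l) * f y.

Definition rel_closed (T : topologicalType) (B S : set T) : Prop :=
  S `<=` B /\ exists C : set T, closed C /\ S = C `&` B.

Definition regular_minimal_logpartition (R : realType) (k : nat)
  (Theta : set 'rV[R]_k) (A : 'rV[R]_k -> R) : Prop :=
  [/\ open Theta, convex_set Theta,
      (forall th, Theta th -> differentiable A th),
      strictly_convex_on Theta A
    & open (grad A @` Theta)].

Definition meanspace (R : realType) (k : nat) (Theta : set 'rV[R]_k)
  (A : 'rV[R]_k -> R) : set 'rV[R]_k := grad A @` Theta.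

Definition theta_of (R : realType) (k : nat) (Theta : set 'rV[R]_k)
  (A : 'rV[R]_k -> R) (mu : 'rV[R]_k) : 'rV[R]_k :=
  xget 0 [set th | Theta th /\ grad A th = mu].

Definition conjA (R : realType) (k : nat) (Theta : set 'rV[R]_k)
  (A : 'rV[R]_k -> R) (mu : 'rV[R]_k) : R :=
  sup [set dotv mu th - A th | th in Theta].

Definition KL (R : realType) (k : nat) (Theta : set 'rV[R]_k)
  (A : 'rV[R]_k -> R) (mu1 th2 : 'rV[R]_k) : R :=
  - dotv mu1 th2 + conjA Theta A mu1 + A th2.

Definition is_argmin (T : Type) (R : realType) (f : T -> R) (S : set T) (x : T)
  : Prop := S x /\ forall y, S y -> f x <= f y.

Definition C_u (R : realType) (ku kv : nat) (Theta : set 'rV[R]_(ku + kv))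
  (A : 'rV[R]_(ku + kv) -> R) (Mu' : set 'rV[R]_ku) : set 'rV[R]_(ku + kv) :=
  [set mu | meanspace Theta A mu /\ Mu' (upart mu)].
Definition C_v (R : realType) (ku kv : nat) (Theta : set 'rV[R]_(ku + kv))
  (Thv' : set 'rV[R]_kv) : set 'rV[R]_(ku + kv) :=
  [set th | Theta th /\ Thv' (vpart th)].

(* mu (a mean parameter) represents an element of the mixed convex family E':
   its mixed parameter (mu_u, theta_v(mu)) lies in M'_u x Theta'_v. *)
Definition in_mixed_family (R : realType) (ku kv : nat)
  (Theta : set 'rV[R]_(ku + kv)) (A : 'rV[R]_(ku + kv) -> R)
  (Mu' : set 'rV[R]_ku) (Thv' : set 'rV[R]_kv) (mu : 'rV[R]_(ku + kv)) : Prop :=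
  [/\ meanspace Theta A mu, Mu' (upart mu) & Thv' (vpart (theta_of Theta A mu))].

Arguments upart {R ku kv} x.
Arguments vpart {R ku kv} x.
Arguments grad {R n} f x.

(* Step (S1): moving thhat along a u-coordinate keeps it in C_v, so the
   first-order condition at the minimiser reads d_u A(thhat) = u.
   Step (S2): moving muchk along a v-coordinate keeps it in C_u.  Writing
   muchk + s e_J = grad A q_s and using Fenchel's equality
   A*(grad A q) = <grad A q, q> - A q, optimality of muchk becomes
   s thhat_J <= s (q_s)_J.  The Bregman divergence of A at theta(muchk) grows
   at least linearly away from theta(muchk) (minimum over a small sphere,
   convexity along rays), which forces q_s -> theta(muchk) as s -> 0; hence
   thhat_J = theta(muchk)_J. *)

From HB Require Import structures.
From mathcomp Require Import all_boot all_order all_algebra.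
From mathcomp Require Import all_classical all_reals all_analysis.
From mathcomp Require Import ring lra.
Set Implicit Arguments. Unset Strict Implicit. Unset Printing Implicit Defensive.
Import Order.TTheory GRing.Theory Num.Theory.
Import numFieldNormedType.Exports.
Local Open Scope classical_set_scope.
Local Open Scope ring_scope.

Section DotProduct.
Variables (R : realType) (n : nat).
Implicit Types (x y z : 'rV[R]_n).

Lemma dotvC x y : dotv x y = dotv y x.
Proof. by apply: eq_bigr => i _; rewrite mulrC. Qed.

Lemma dotvDr x y z : dotv x (y + z) = dotv x y + dotv x z.
Proof. by rewrite /dotv -big_split; apply: eq_bigr => i _; rewrite mxE mulrDr. Qed.

Lemma dotvZr x y (a : R) : dotv x (a *: y) = a * dotv x y.
Proof. by rewrite /dotv mulr_sumr; apply: eq_bigr => i _; rewrite mxE mulrCA. Qed.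

Lemma dotvNr x y : dotv x (- y) = - dotv x y.
Proof. by rewrite -scaleN1r dotvZr mulN1r. Qed.

Lemma dotvBr x y z : dotv x (y - z) = dotv x y - dotv x z.
Proof. by rewrite dotvDr dotvNr. Qed.

Lemma dotvDl x y z : dotv (x + y) z = dotv x z + dotv y z.
Proof. by rewrite dotvC dotvDr !(dotvC z). Qed.

Lemma dotvZl x y (a : R) : dotv (a *: x) y = a * dotv x y.
Proof. by rewrite dotvC dotvZr dotvC. Qed.

Lemma dotvBl x y z : dotv (x - y) z = dotv x z - dotv y z.
Proof. by rewrite dotvC dotvBr !(dotvC z). Qed.

Lemma dotv_deltar x (j : 'I_n) : dotv x 'e_j = x 0 j.
Proof.
rewrite /dotv (bigD1 j) //= big1 ?addr0; first by rewrite mxE !eqxx mulr1.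
by move=> i ij; rewrite mxE (negbTE ij) andbF mulr0.
Qed.

Lemma dotv_deltal x (j : 'I_n) : dotv 'e_j x = x 0 j.
Proof. by rewrite dotvC dotv_deltar. Qed.

Lemma diff_dotv_grad (f : 'rV[R]_n -> R) x v : 'd f x v = dotv (grad f x) v.
Proof.
rewrite {1}(row_sum_delta v) linear_sum /dotv; apply: eq_bigr => i _.
by rewrite linearZ /= mxE mulrC.
Qed.

End DotProduct.

Section DirectionalDerivative.
Variables (R : realType) (n : nat) (f : 'rV[R]_n -> R) (x : 'rV[R]_n).
Hypothesis dfx : differentiable f x.

Lemma diff_quotient_cvg (v : 'rV[R]_n) :
  (fun h : R => h^-1 * (f (h *: v + x) - f x)) @ 0^' --> 'd f x v.
Proof.
rewrite -deriveE //; have /cvg_ex[l fl] := @diff_derivable _ _ _ f x v dfx.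
by rewrite /derive (cvg_lim _ fl).
Qed.

Lemma diff_dir_ge (v : 'rV[R]_n) a :
  (\forall h \near 0^'+, h * a <= f (h *: v + x) - f x) -> a <= 'd f x v.
Proof.
move=> Ha; have fl := cvg_dnbhs_at_right (@diff_quotient_cvg v).
rewrite -(cvg_lim _ fl) //; apply: limr_ge; first by apply/cvg_ex; exists ('d f x v).
near=> h; have h0 : 0 < h by near: h; exact: nbhs_right_gt.
by rewrite ler_pdivlMl //; near: h.
Unshelve. all: by end_near.
Qed.

Lemma diff_dir_le (v : 'rV[R]_n) b :
  (\forall h \near 0^'+, f (h *: v + x) - f x <= h * b) -> 'd f x v <= b.
Proof.
move=> Hb; have fl := cvg_dnbhs_at_right (@diff_quotient_cvg v).
rewrite -(cvg_lim _ fl) //; apply: limr_le; first by apply/cvg_ex; exists ('d f x v).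
near=> h; have h0 : 0 < h by near: h; exact: nbhs_right_gt.
by rewrite ler_pdivrMl //; near: h.
Unshelve. all: by end_near.
Qed.

Lemma diff_dir_eq (v : 'rV[R]_n) a :
  (exists2 d, 0 < d & forall h, `|h| < d -> h * a <= f (h *: v + x) - f x) ->
  'd f x v = a.
Proof.
move=> [d d0 Hd]; apply/eqP; rewrite eq_le; apply/andP; split; last first.
  apply: diff_dir_ge; near=> h; apply: Hd; rewrite gtr0_norm.
    by near: h; exact: nbhs_right_lt.
  by near: h; exact: nbhs_right_gt.
have : - a <= 'd f x (- v); last by rewrite linearN lerN2.
apply: diff_dir_ge; near=> h; rewrite scalerN -scaleNr mulrN -mulNr; apply: Hd.
rewrite normrN gtr0_norm; first by near: h; exact: nbhs_right_lt.
by near: h; exact: nbhs_right_gt.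
Unshelve. all: by end_near.
Qed.

End DirectionalDerivative.

Section NormedRows.
Variables (R : realType) (n : nat).
Implicit Types (x v : 'rV[R]_n).

Lemma open_line (S : set 'rV[R]_n) x v : open S -> S x ->
  exists2 d, 0 < d & forall h : R, `|h| < d -> S (h *: v + x).
Proof.
move=> oS Sx; have /nbhs_ballP[e e0 eS] : nbhs x S by apply: open_nbhs_nbhs.
have v1 : 0 < `|v| + 1 by rewrite ltr_wpDl.
exists (e / (`|v| + 1)) => [|h]; first by rewrite divr_gt0.
rewrite ltr_pdivlMr // => hd; apply: eS; rewrite -ball_normE /ball_ /=.
rewrite opprD addrCA subrr addr0 normrN normrZ (le_lt_trans _ hd) //.
by rewrite ler_wpM2l // lerDl.
Qed.

Lemma coord_le_norm x (j : 'I_n) : `|x 0 j| <= `|x|.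
Proof.
rewrite [leRHS]/Num.norm /= mx_normrE; apply/bigmax_geP; right => /=.
by exists (ord0, j).
Qed.

Lemma sphere_compact (c : 'rV[R]_n) (r : R) : compact [set p | `|p - c| = r].
Proof.
apply: bounded_closed_compact.
  rewrite /= /bounded_near; near=> M => p /= pr.
  rewrite -(subrK c p) (le_trans (ler_normD _ _)) // pr.
  by near: M; apply: nbhs_pinfty_ge; exact: num_real.
have -> : [set p | `|p - c| = r] = (fun p => `|p - c|) @^-1` [set r] by [].
apply: preimage_closed; last exact: closed_eq.
move=> p _; apply: continuous_comp; last exact: norm_continuous.
exact: (cvgB cvg_id (cvg_cst c)).
Unshelve. all: by end_near.
Qed.

End NormedRows.

Definition bregman (R : realType) (n : nat) (f : 'rV[R]_n -> R) (x y : 'rV[R]_n)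
  : R :=
  f y - f x - dotv (grad f x) (y - x).

Section ConvexFunction.
Variables (R : realType) (n : nat) (Th : set 'rV[R]_n) (f : 'rV[R]_n -> R).
Hypotheses (oTh : open Th) (cTh : convex_set Th).
Hypotheses (df : forall x, Th x -> differentiable f x) (sc : strictly_convex_on Th f).
Implicit Types (x y p : 'rV[R]_n).

Lemma strictly_convex_onW x y l : Th x -> Th y -> 0 <= l <= 1 ->
  f (l *: x + (1 - l) *: y) <= l * f x + (1 - l) * f y.
Proof.
move=> Tx Ty /andP[l0 l1].
have [->|l_neq0] := eqVneq l 0.
  by rewrite scale0r add0r subr0 scale1r mul0r add0r mul1r.
have [->|l_neq1] := eqVneq l 1.
  by rewrite subrr scale0r addr0 scale1r mul0r addr0 mul1r.
have [<-|xy] := eqVneq x y.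
  by rewrite -scalerDl addrC subrK scale1r -mulrDl addrC subrK mul1r.
apply/ltW/sc => //; first exact/eqP.
  by rewrite lt_neqAle eq_sym l_neq0.
by rewrite lt_neqAle l_neq1.
Qed.

Lemma bregman_ge0 x y : Th x -> Th y -> 0 <= bregman f x y.
Proof.
move=> Tx Ty; rewrite /bregman -diff_dotv_grad subr_ge0.
apply: diff_dir_le; first exact: df.
near=> h; have /andP[h0 h1] : 0 < h < 1.
  by apply/andP; split; near: h; [exact: nbhs_right_gt | exact: nbhs_right_lt].
have -> : h *: (y - x) + x = h *: y + (1 - h) *: x.
  by apply/rowP => i; rewrite !mxE; ring.
have h01 : 0 <= h <= 1 by rewrite !ltW.
have := strictly_convex_onW Ty Tx h01; lra.
Unshelve. all: by end_near.
Qed.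

Lemma bregman_ray x y l : Th x -> Th y -> 0 <= l <= 1 ->
  bregman f x (l *: (y - x) + x) <= l * bregman f x y.
Proof.
move=> Tx Ty l01; have := strictly_convex_onW Ty Tx l01.
have -> : l *: y + (1 - l) *: x = l *: (y - x) + x.
  by apply/rowP => i; rewrite !mxE; ring.
by rewrite /bregman addrK dotvZr; lra.
Qed.

Lemma bregman_gt0 x y : Th x -> Th y -> y != x -> 0 < bregman f x y.
Proof.
move=> Tx Ty yx; have h0 : (0 : R) < 1/2 by lra.
have h1 : (1/2 : R) < 1 by lra.
set m := (1/2 : R) *: y + (1 - 1/2) *: x.
have Tm : Th m by have := @cTh y x (Itv01 (ltW h0) (ltW h1)); rewrite !inE; apply.
have mx : m - x = (1/2 : R) *: (y - x) by apply/rowP => i; rewrite !mxE; ring.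
have := sc Ty Tx (elimN eqP yx) h0 h1.
have := bregman_ge0 Tx Tm; rewrite /bregman mx dotvZr; lra.
Qed.

Lemma bregman_le_dotv_grad x y : Th x -> Th y ->
  bregman f x y <= dotv (grad f y - grad f x) (y - x).
Proof.
move=> Tx Ty; have := bregman_ge0 Ty Tx; rewrite /bregman.
(* Generalizing the gradients keeps the unifier from unfolding [grad]. *)
by move: (grad f x) (grad f y) => gx gy; rewrite dotvBl !dotvBr; lra.
Qed.

Lemma conjA_grad x : Th x -> conjA Th f (grad f x) = dotv (grad f x) x - f x.
Proof.
move=> Tx; set E := [set dotv (grad f x) y - f y | y in Th].
have ubE : ubound E (dotv (grad f x) x - f x).
  by move=> _ [y Ty <-]; have := bregman_ge0 Tx Ty; rewrite /bregman dotvBr; lra.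
apply/eqP; rewrite eq_le; apply/andP; split.
  by apply: ge_sup => //; exists (dotv (grad f x) x - f x), x.
by apply: ub_le_sup; [exists (dotv (grad f x) x - f x) | exists x].
Qed.

Lemma bregman_continuous x y : Th x -> Th y -> {for y, continuous (bregman f x)}.
Proof.
move=> Tx Ty; have -> : bregman f x = fun z => f z - f x - 'd f x (z - x).
  by apply/funext => z; rewrite /bregman diff_dotv_grad.
have dcont : {for y, continuous (fun z : 'rV[R]_n => 'd f x (z - x))}.
  apply: continuous_comp; first exact: (cvgB cvg_id (cvg_cst x)).
  exact: diff_continuous (df Tx) _.
exact: (cvgB (cvgB (differentiable_continuous (df Ty)) (cvg_cst (f x))) dcont).
Qed.

Lemma bregman_sphere_min x r : Th x -> 0 < r -> [set p | `|p - x| = r] `<=` Th ->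
  exists2 m, 0 < m & forall p, `|p - x| = r -> m <= bregman f x p.
Proof.
move=> Tx r0 STh; set S := [set p | `|p - x| = r].
have [S0|/set0P S_neq0] := eqVneq S set0.
  by exists 1 => // p Sp; have : S p by []; rewrite S0.
have contS : {within S, continuous bregman f x}.
  by apply: continuous_in_subspaceT => p /set_mem /STh Tp; exact: bregman_continuous.
have [p0 /set_mem Sp0 p0_min] := EVT_min_rV S_neq0 (@sphere_compact _ _ x r) contS.
exists (bregman f x p0) => [|p Sp]; last by apply: p0_min; rewrite inE.
apply: bregman_gt0 => //; first exact: STh.
by apply: contraTneq r0 => p0x; rewrite -Sp0 p0x subrr normr0 ltxx.
Qed.

Lemma bregman_coercive x r : Th x -> 0 < r -> exists2 d, 0 < d &
  forall y, Th y -> bregman f x y <= d * `|y - x| -> `|y - x| < r.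
Proof.
move=> Tx r0; have /nbhs_ballP[e e0 eTh] : nbhs x Th by apply: open_nbhs_nbhs.
set r' := Num.min r (e / 2).
have r'0 : 0 < r' by rewrite lt_min r0 divr_gt0.
have STh : [set p | `|p - x| = r'] `<=` Th.
  move=> p /= px; apply: eTh; rewrite -ball_normE /ball_ /= distrC px.
  by rewrite gt_min ltr_pdivrMr // ltr_pMr // ltr1n orbT.
have [m m0 m_min] := bregman_sphere_min Tx r'0 STh.
exists (m / (2 * r')) => [|y Ty Dy]; first by rewrite divr_gt0 ?mulr_gt0.
have r'r : r' <= r by rewrite ge_min lexx.
apply: (lt_le_trans _ r'r); rewrite ltNge; apply/negP => r'y.
have y0 : 0 < `|y - x| by apply: lt_le_trans r'y.
set l := r' / `|y - x|.
have l0 : 0 <= l by rewrite divr_ge0 ?ltW.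
have l01 : 0 <= l <= 1 by rewrite l0 /= ler_pdivrMr // mul1r.
have Dp : m <= bregman f x (l *: (y - x) + x).
  by apply: m_min; rewrite addrK normrZ ger0_norm // divfK ?gt_eqF.
have := le_trans Dp (le_trans (bregman_ray Tx Ty l01) (ler_wpM2l l0 Dy)).
suff -> : l * (m / (2 * r') * `|y - x|) = m / 2 by lra.
by rewrite /l; field; apply/andP; split; rewrite gt_eqF.
Qed.

Lemma grad_line_preimage_near x (j : 'I_n) r : Th x -> 0 < r -> exists2 d, 0 < d &
  forall s q, `|s| < d -> Th q -> grad f q = s *: 'e_j + grad f x ->
  `|q 0 j - x 0 j| < r.
Proof.
move=> Tx r0; have [d d_gt0 Hd] := bregman_coercive Tx r0.
exists d => // s q sd Tq gq; have := coord_le_norm (q - x) j.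
rewrite !mxE => /le_lt_trans; apply; apply: Hd => //.
apply: le_trans (bregman_le_dotv_grad Tx Tq) _.
rewrite gq addrK dotvZl dotv_deltal; apply: le_trans (ler_norm _) _.
by rewrite normrM ler_pM ?coord_le_norm // ltW.
Qed.

End ConvexFunction.

Section MixedEstimation.
Variables (R : realType) (ku kv : nat).
Variables (Theta : set 'rV[R]_(ku + kv)) (A : 'rV[R]_(ku + kv) -> R).
Hypotheses (oT : open Theta) (cT : convex_set Theta).
Hypotheses (dA : forall th, Theta th -> differentiable A th).
Hypotheses (sc : strictly_convex_on Theta A) (oM : open (meanspace Theta A)).

Lemma theta_ofP mu : meanspace Theta A mu ->
  Theta (theta_of Theta A mu) /\ grad A (theta_of Theta A mu) = mu.
Proof.
case=> th Tth gth; have := @xgetPex _ 0 [set th | Theta th /\ grad A th = mu].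
by apply; exists th.
Qed.

Lemma argmin_Cv_upart_grad (Thv' : set 'rV[R]_kv) t thhat :
  is_argmin (fun th => KL Theta A t th) (C_v Theta Thv') thhat ->
  upart (grad A thhat) = upart t.
Proof.
case=> -[Tth Vth] mn; apply/rowP => i; rewrite !mxE.
set e : 'rV[R]_(ku + kv) := 'e_(lshift kv i).
apply: (diff_dir_eq (dA Tth)).
have [d d0 Hd] := open_line e oT Tth; exists d => // h hd.
have Ch : C_v Theta Thv' (h *: e + thhat).
  split; first exact: Hd.
  suff -> : vpart (h *: e + thhat) = vpart thhat by exact: Vth.
  by apply/rowP => j; rewrite !mxE eq_rlshift andbF mulr0 add0r.
by have := mn _ Ch; rewrite /KL dotvDr dotvZr dotv_deltar; lra.
Qed.

Lemma argmin_Cu_coord_le (Mu' : set 'rV[R]_ku) thhat muchk ths q (j : 'I_kv) s :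
  is_argmin (fun mu => KL Theta A mu thhat) (C_u Theta A Mu') muchk ->
  Theta ths -> grad A ths = muchk ->
  Theta q -> grad A q = s *: 'e_(rshift ku j) + muchk ->
  s * thhat 0 (rshift ku j) <= s * q 0 (rshift ku j).
Proof.
case=> -[_ Um] mn Tths gths Tq gq.
have Cs : C_u Theta A Mu' (s *: 'e_(rshift ku j) + muchk).
  split; first by exists q.
  suff -> : upart (s *: 'e_(rshift ku j) + muchk) = upart muchk by exact: Um.
  by apply/rowP => i; rewrite !mxE eq_lrshift andbF mulr0 add0r.
have := mn _ Cs; rewrite /KL.
have := conjA_grad dA sc Tq; rewrite gq => ->.
have := conjA_grad dA sc Tths; rewrite gths => ->.
have := bregman_ge0 dA sc Tths Tq; rewrite /bregman gths.
by rewrite !dotvBr !dotvDl !dotvZl !dotv_deltal; lra.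
Qed.

Lemma argmin_Cu_vpart_theta (Mu' : set 'rV[R]_ku) thhat muchk :
  is_argmin (fun mu => KL Theta A mu thhat) (C_u Theta A Mu') muchk ->
  vpart (theta_of Theta A muchk) = vpart thhat.
Proof.
move=> S2; have Mm := S2.1.1; have [] := theta_ofP Mm.
move: (theta_of Theta A muchk) => ths Tths gths.
apply/rowP => j; rewrite !mxE; set J := rshift ku j; set c := thhat 0 J - ths 0 J.
apply/eqP; rewrite eq_sym -subr_eq0 -normr_le0 -/c; apply/ler_addgt0Pr => r r0.
have [d0 d0_gt0 Hd0] := open_line 'e_J oM Mm.
have [d d_gt0 Hd] := grad_line_preimage_near oT cT dA sc J Tths r0.
rewrite gths in Hd; rewrite add0r; set h := Num.min d0 d / 2.
have h0 : 0 < h by rewrite divr_gt0 // lt_min d0_gt0.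
have hd : h < Num.min d0 d by rewrite ltr_pdivrMr // ltr_pMr ?ltr1n // lt_min d0_gt0.
(* Moving along e_J in the direction of sign c turns s c into h |c|. *)
set s := h * Num.sg c.
have sh : `|s| <= h.
  rewrite normrM normr_sg gtr0_norm //.
  by case: (c != 0); rewrite /= ?mulr1 ?mulr0 // ltW.
have /andP[sd0 sd] : (`|s| < d0) && (`|s| < d) by rewrite -lt_min (le_lt_trans sh).
have [q Tq gq] := Hd0 s sd0.
have qJ := Hd s q sd Tq gq.
rewrite -(ler_pM2l h0) normrEsg mulrA -/s.
apply: le_trans (_ : s * (q 0 J - ths 0 J) <= _).
  by rewrite /c !mulrBr lerD2r (argmin_Cu_coord_le S2 Tths gths Tq gq).
apply: le_trans (ler_norm _) _; rewrite normrM ler_pM //; exact: ltW qJ.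
Qed.

End MixedEstimation.

Theorem theorem4p5 (R : realType) (ku kv : nat)
  (Theta : set 'rV[R]_(ku + kv)) (A : 'rV[R]_(ku + kv) -> R)
  (Mu' : set 'rV[R]_ku) (Thv' : set 'rV[R]_kv)
  (t thhat muchk : 'rV[R]_(ku + kv)) :
  regular_minimal_logpartition Theta A ->
  Mu' `<=` upart @` meanspace Theta A -> convex_set Mu' ->
  rel_closed (upart @` meanspace Theta A) Mu' ->
  Thv' `<=` vpart @` Theta -> convex_set Thv' ->
  rel_closed (vpart @` Theta) Thv' ->
  is_argmin (fun th => KL Theta A t th) (C_v Theta Thv') thhat ->
  is_argmin (fun mu => KL Theta A mu thhat) (C_u Theta A Mu') muchk ->
  [/\ upart (grad A thhat) = upart t,
      (upart @` meanspace Theta A) (upart t),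
      vpart (theta_of Theta A muchk) = vpart thhat
    & in_mixed_family Theta A Mu' Thv' muchk].
Proof.
(* Convexity and closedness of M'_u and Theta'_v only matter for the
   existence of the two optima, which is assumed here. *)
move=> [oT cT dA sc oM] _ _ _ _ _ _ S1 S2.
have u_eq := argmin_Cv_upart_grad oT dA S1.
have v_eq := argmin_Cu_vpart_theta oT cT dA sc oM S2.
case: S1 S2 => -[Tth Vth] _ [[Mm Um] _].
split => //; first by rewrite -u_eq; exists (grad A thhat) => //; exists thhat.
by split => //; rewrite v_eq.
Qed.
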